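(* There exists an absolute constant $m_0$ such that the following holds for every integer $m\ge m_0$. Let $q=2^m$ and $a,b\in\mathbb{F}_{q^2}$, and let $P_1(x)=ax^{q+1}+bx^{2(q+1)}\in\mathbb{F}_{q^2}[x]$. Then $P_1$ is a planar function on $\mathbb{F}_{q^2}$ if and only if $$(a,b)=\Big(\frac{s^q}{1+s^{1+q}},\,0\Big)$$ for some $s\in\mathbb{F}_{q^2}$ with $1+s^{1+q}\neq 0$.
   Context: A function $f:\mathbb{F}_{2^n}\to\mathbb{F}_{2^n}$ is called planar if for every $a\in\mathbb{F}_{2^n}^{*}$ the map $x\mapsto f(x+a)+f(x)+ax$ is a permutation of $\mathbb{F}_{2^n}$. *)

From HB Require Import structures.
From mathcomp Require Import all_boot all_order all_algebra all_field.
Set Implicit Arguments. Unset Strict Implicit. Unset Printing Implicit Defensive.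
Import GRing.Theory.
Local Open Scope ring_scope.

Definition planar (F : finFieldType) (f : F -> F) : Prop :=
  forall a : F, a != 0 -> bijective (fun x : F => f (x + a) + f x + a * x).

From HB Require Import structures.
From mathcomp Require Import all_boot all_order all_algebra all_field.
From mathcomp Require Import ring zify.
Set Implicit Arguments.
Unset Strict Implicit.
Unset Printing Implicit Defensive.

Import GRing.Theory.
Local Open Scope ring_scope.

(* Write q = 2^m and tr x = x + x^q, nm x = x^(q+1) for the trace and norm of
   F_{q^2} over F_q, so that P1 x = a nm x + b nm x^2.  The derivative of P1 in
   direction u is P1 u plus an additive map, hence P1 is planar iff all these
   additive maps have trivial kernel.  Explicit kernel elements show that a
   planar P1 satisfies, for every w <> 0, tr (a w^2) = nm w when
   tr (b w^2) <> 0, and tr (a w^2) <> nm w otherwise.  For q >= 4 the first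
   condition is incompatible with b <> 0; for b = 0 the second one, applied to a
   square root w of y / a where y^2 + y = nm a, forces y into F_q, and y then
   yields s.  Such a y exists because y |-> y^2 + y is two-to-one onto the
   kernel of the absolute trace, which contains F_q.  Conversely, for a = s^q / (1 + nm s) a nonzero kernel element
   would produce g with tr g = 1 + nm g <> 0; but then g is a root of
   (X + 1)(X + nm g), so g lies in F_q, where the trace vanishes. *)

Section Char2.
Variable R : idomainType.
Hypothesis pchar2R : 2%N \in [pchar R].

Lemma addr_eq0_pchar2 (x y : R) : (x + y == 0) = (x == y).
Proof. by rewrite addr_eq0 (oppr_pchar2 pchar2R). Qed.

Lemma eq_addmulr2n_pchar2 (x y c : R) : x = y + c *+ 2 -> x = y.
Proof. by move=> ->; rewrite (mulrn_pchar pchar2R) addr0. Qed.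

Lemma exprD_pow2_pchar2 k (x y : R) :
  (x + y) ^+ (2 ^ k) = x ^+ (2 ^ k) + y ^+ (2 ^ k).
Proof. by apply: exprDn_pchar; rewrite pnatX pnatE ?pchar2R. Qed.

Lemma sqrrD_pchar2 (x y : R) : (x + y) ^+ 2 = x ^+ 2 + y ^+ 2.
Proof. exact: (exprD_pow2_pchar2 1). Qed.

Lemma sqr_inj_pchar2 : injective (fun x : R => x ^+ 2).
Proof.
move=> x y /= exy; apply/eqP; rewrite -addr_eq0_pchar2 -sqrf_eq0.
by rewrite sqrrD_pchar2 exy (addrr_pchar2 pchar2R).
Qed.

Lemma sqr_add_fiber (y z : R) : y ^+ 2 + y = z ^+ 2 + z -> z = y \/ z = y + 1.
Proof.
move=> eyz; have : (y + z) * (y + z + 1) == 0.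
  have -> : (y + z) * (y + z + 1) = (y ^+ 2 + y) + (z ^+ 2 + z) + (y * z) *+ 2 by ring.
  by rewrite eyz (addrr_pchar2 pchar2R) add0r (mulrn_pchar pchar2R).
rewrite mulf_eq0 !addr_eq0_pchar2 => /orP[/eqP -> | /eqP yz1]; first by left.
by right; rewrite -yz1 addrA (addrr_pchar2 pchar2R) add0r.
Qed.

End Char2.

Lemma card_lt_size_roots (R : finIdomainType) (p : {poly R}) (A : {set R}) :
  p != 0 -> {in A, forall x, root p x} -> (#|A| < size p)%N.
Proof.
move=> p_neq0 rootA; rewrite cardE max_poly_roots ?enum_uniq //.
by apply/allP => x; rewrite mem_enum => /rootA.
Qed.

Lemma exists_expr_neq (R : finIdomainType) n :
  (1 < n < #|R|)%N -> exists x : R, x ^+ n != x.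
Proof.
case/andP=> n_gt1 n_ltR; apply/existsP; apply: contraLR n_ltR.
rewrite negb_exists -leqNgt => /forallP fixR.
have size_p : size ('X^n - 'X : {poly R}) = n.+1.
  by rewrite size_polyDl size_polyXn // size_polyN size_polyX.
rewrite -ltnS -size_p -cardsT card_lt_size_roots -?size_poly_gt0 ?size_p // => x _.
by rewrite rootE !hornerE subr_eq0 (negPn (fixR x)).
Qed.

Lemma exists_sqrt_pchar2 (F : finFieldType) :
  2%N \in [pchar F] -> forall c : F, exists r, r ^+ 2 = c.
Proof.
move=> pchar2F c; have [g _ gK] := injF_bij (sqr_inj_pchar2 pchar2F).
by exists (g c); rewrite gK.
Qed.
Section AbsoluteTrace.
Variables (F : finFieldType) (n : nat).
Hypothesis cardF : #|F| = (2 ^ n.+1)%N.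

Lemma pchar2_card : 2%N \in [pchar F].
Proof. exact: card_finPcharP cardF _. Qed.

Definition atr (z : F) := \sum_(i < n.+1) z ^+ (2 ^ i).

Lemma atr_sqr_add y : atr (y ^+ 2 + y) = 0.
Proof.
have summandE i : (y ^+ 2 + y) ^+ (2 ^ i) = y ^+ (2 ^ i.+1) - y ^+ (2 ^ i).
  by rewrite exprD_pow2_pchar2 ?pchar2_card // -exprM -expnS (oppr_pchar2 pchar2_card).
rewrite /atr -(big_mkord xpredT (fun i => _ ^+ (2 ^ i))).
rewrite (eq_bigr _ (fun i _ => summandE i)).
by rewrite telescope_sumr // -cardF expf_card subrr.
Qed.

Lemma card_atr_roots : (#|[set z | atr z == 0%R]| <= 2 ^ n)%N.
Proof.
pose p : {poly F} := \sum_(i < n.+1) 'X^(2 ^ i).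
have size_p : size p = (2 ^ n).+1.
  rewrite /p big_ord_recr /= addrC size_polyDl size_polyXn // ltnS.
  apply: (big_ind (fun r : {poly F} => size r <= 2 ^ n)%N) => [|r s|i _].
  - by rewrite size_poly0.
  - by move=> r_le s_le; rewrite (leq_trans (size_polyD _ _)) // geq_max r_le.
  - by rewrite size_polyXn ltn_exp2l.
rewrite -ltnS -size_p card_lt_size_roots -?size_poly_gt0 ?size_p // => z.
rewrite inE rootE /p horner_sum.
by under eq_bigr do rewrite hornerXn.
Qed.

Lemma card_sqr_add_image : (#|F| <= 2 * #|[set (y ^+ 2 + y)%R | y : F]|)%N.
Proof.
pose psi (y : F) := y ^+ 2 + y.
rewrite -[X in (X <= _)%N]sum1_card.
rewrite (partition_big psi (mem [set psi y | y : F])) => [|y _]; last exact: imset_f.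
rewrite mulnC -sum_nat_const; apply: leq_sum => _ /imsetP[y _ ->].
have fiber_sub : [set x | psi x == psi y] \subset [set y; y + 1].
  apply/subsetP => z; rewrite !inE => /eqP/esym/(sqr_add_fiber pchar2_card).
  by case=> ->; rewrite eqxx ?orbT.
rewrite sum1dep_card (leq_trans (subset_leq_card fiber_sub)) //.
by rewrite cards2 ltnS leq_b1.
Qed.

Lemma atr_eq0_sqr_add z : atr z = 0 -> exists y, y ^+ 2 + y = z.
Proof.
move=> atr_z0; pose K := [set z | atr z == 0%R].
have image_sub : [set y ^+ 2 + y | y : F] \subset K.
  by apply/subsetP => _ /imsetP[y _ ->]; rewrite inE atr_sqr_add.
have : z \in K by rewrite inE atr_z0.
rewrite -(_ : [set y ^+ 2 + y | y : F] = K); first by case/imsetP=> y; exists y.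
apply/eqP; rewrite eqEcard image_sub /= -(leq_pmul2l (isT : 0 < 2)%N).
by rewrite (leq_trans _ card_sqr_add_image) // cardF expnS leq_mul2l card_atr_roots.
Qed.

Lemma atr_eq0_fixed k z : n.+1 = (2 * k)%N -> z ^+ (2 ^ k) = z -> atr z = 0.
Proof.
move=> n_eq z_fixed; rewrite /atr n_eq mul2n -addnn big_split_ord /=.
under [X in _ + X]eq_bigr => i _ do rewrite expnD exprM z_fixed.
exact: addrr_pchar2 pchar2_card _.
Qed.

End AbsoluteTrace.

Section QuadraticExtension.
Variables (F : finFieldType) (m : nat).
Hypothesis cardF : #|F| = ((2 ^ m) ^ 2)%N.
Local Notation q := (2 ^ m)%N.
Implicit Types a b c g h k l r s t u w x y z : F.

Lemma pchar2F : 2%N \in [pchar F].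
Proof. by apply: (@card_finPcharP _ _ (m * 2)); rewrite // cardF expnM. Qed.

Local Notation addrr2 := (addrr_pchar2 pchar2F).
Local Notation addr_eq0_2 := (addr_eq0_pchar2 pchar2F).
Local Notation char2_eq c := (@eq_addmulr2n_pchar2 _ pchar2F _ _ c).
Local Notation sqrrD2 := (sqrrD_pchar2 pchar2F).

Lemma m_gt0 : (0 < m)%N.
Proof. by have := card_finNzRing_gt1 F; rewrite cardF; case: (m). Qed.

Lemma q_gt1 : (1 < q)%N.
Proof. by rewrite -[1%N](expn0 2) ltn_exp2l // m_gt0. Qed.

Lemma exprqD (x y : F) : (x + y) ^+ q = x ^+ q + y ^+ q.
Proof. exact: (exprD_pow2_pchar2 pchar2F m). Qed.

Lemma exprqK (x : F) : (x ^+ q) ^+ q = x.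
Proof. by rewrite -exprM mulnn -cardF expf_card. Qed.

Lemma fixedM x y : x ^+ q = x -> y ^+ q = y -> (x * y) ^+ q = x * y.
Proof. by move=> x_fixed y_fixed; rewrite exprMn x_fixed y_fixed. Qed.
Lemma fixedV x : x ^+ q = x -> x^-1 ^+ q = x^-1.
Proof. by move=> x_fixed; rewrite exprVn x_fixed. Qed.
Lemma fixedX x n : x ^+ q = x -> (x ^+ n) ^+ q = x ^+ n.
Proof. by move=> x_fixed; rewrite exprAC x_fixed. Qed.

Definition tr (x : F) := x + x ^+ q.
Definition nm (x : F) := x * x ^+ q.

Lemma frob_tr x : tr x ^+ q = tr x. Proof. by rewrite exprqD exprqK addrC. Qed.
Lemma frob_nm x : nm x ^+ q = nm x. Proof. by rewrite exprMn exprqK mulrC. Qed.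

Lemma trD x y : tr (x + y) = tr x + tr y. Proof. rewrite /tr exprqD; ring. Qed.
Lemma trMl c x : c ^+ q = c -> tr (c * x) = c * tr x.
Proof. by move=> c_fixed; rewrite /tr exprMn c_fixed mulrDr. Qed.
Lemma tr_frob x : tr (x ^+ q) = tr x. Proof. by rewrite /tr exprqK addrC. Qed.
Lemma tr_eq0_fixed x : x ^+ q = x -> tr x = 0.
Proof. by move=> x_fixed; rewrite /tr x_fixed addrr2. Qed.
Lemma tr0 : tr 0 = 0. Proof. by rewrite /tr expr0n expn_eq0 addr0. Qed.
Lemma tr1 : tr 1 = 0. Proof. exact: tr_eq0_fixed (expr1n _ _). Qed.

Lemma nmD x y : nm (x + y) = nm x + nm y + tr (x * y ^+ q).
Proof. rewrite /nm /tr exprqD exprMn exprqK; ring. Qed.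
Lemma nmM x y : nm (x * y) = nm x * nm y. Proof. rewrite /nm exprMn; ring. Qed.
Lemma nmV x : nm x^-1 = (nm x)^-1. Proof. by rewrite /nm exprVn invfM. Qed.
Lemma nm_sqr x : nm (x ^+ 2) = nm x ^+ 2. Proof. by rewrite /nm exprAC exprMn. Qed.
Lemma nm_eq0 x : (nm x == 0) = (x == 0).
Proof. by rewrite mulf_eq0 expf_eq0 expn_gt0 /= orbb. Qed.
Lemma nmE x : nm x = x ^+ (1 + q). Proof. by rewrite add1n exprS. Qed.

Lemma exists_tr_neq0 : exists c, tr c != 0.
Proof.
have [c c_nonfixed] : exists c : F, c ^+ q != c.
  by apply: exists_expr_neq; rewrite q_gt1 cardF /=; have := q_gt1; nia.
by exists c; apply: contra c_nonfixed; rewrite addr_eq0_2 eq_sym.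
Qed.

Lemma exists_fixed_neq01 : (2 <= m)%N ->
  exists2 l : F, l ^+ q = l & (l != 0) && (l != 1).
Proof.
move=> m_ge2; have q_ge4 : (4 <= q)%N by rewrite -[4%N]/(2 ^ 2)%N leq_exp2l.
have [x x_nonfixed] : exists x : F, x ^+ q.+2 != x.
  by apply: exists_expr_neq; rewrite cardF; nia.
exists (nm x); first exact: frob_nm.
rewrite nm_eq0; apply/andP; split; apply: contra x_nonfixed => /eqP x_eq.
  by rewrite x_eq expr0n.
by rewrite !exprS -/(nm x) x_eq mulr1.
Qed.

Lemma tr_neq_1_add_nm g : 1 + nm g != 0 -> tr g != 1 + nm g.
Proof.
move=> k_neq0; apply: contra k_neq0 => /eqP tr_g.
have root_g : (g + 1) * (g + nm g) = 0.
  have -> : (g + 1) * (g + nm g) = g * (1 + nm g - tr g) + (g * g + g * g ^+ q) *+ 2.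
    by rewrite /tr /nm; ring.
  by rewrite tr_g subrr mulr0 add0r (mulrn_pchar pchar2F).
rewrite -tr_g tr_eq0_fixed //.
by move/eqP: root_g; rewrite mulf_eq0 !addr_eq0_2 => /orP[] /eqP ->;
  [exact: expr1n | exact: frob_nm].
Qed.

Definition P1 (a b x : F) := a * x ^+ q.+1 + b * x ^+ (2 * q.+1).

Definition derivL (a b u x : F) :=
  u * x + a * tr (x * u ^+ q) + b * tr (x * u ^+ q) ^+ 2.

Lemma P1E a b x : P1 a b x = a * nm x + b * nm x ^+ 2.
Proof. by rewrite /P1 mulnC exprM exprS. Qed.

Lemma P1_deriv a b u x :
  P1 a b (x + u) + P1 a b x + u * x = P1 a b u + derivL a b u x.
Proof.
rewrite !P1E nmD [(_ + tr _) ^+ 2]sqrrD2 (sqrrD2 (nm x)).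
by apply: (char2_eq (a * nm x + b * nm x ^+ 2)); rewrite /derivL; ring.
Qed.

Lemma derivLD a b u : {morph derivL a b u : x y / x + y}.
Proof. by move=> x y; rewrite /derivL mulrDl trD sqrrD2; ring. Qed.

Lemma derivL0 a b u : derivL a b u 0 = 0.
Proof. by rewrite /derivL mul0r tr0 expr0n /= !mulr0 !addr0. Qed.

Lemma planarP a b :
  planar (P1 a b) <-> forall u z, u != 0 -> derivL a b u z = 0 -> z = 0.
Proof.
split=> [planar_ab u z u_neq0 Lz0 | kerL u u_neq0].
  have [g fK _] := planar_ab u u_neq0; apply: (can_inj fK).
  by rewrite /= !P1_deriv Lz0 derivL0.
apply: injF_bij => x y /=; rewrite !P1_deriv => /addrI Lxy.
apply/eqP; rewrite -addr_eq0_2; apply/eqP/(kerL u) => //.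
by rewrite derivLD Lxy addrr2.
Qed.

Lemma planar_P1_s s : 1 + nm s != 0 -> planar (P1 (s ^+ q / (1 + nm s)) 0).
Proof.
set k := 1 + nm s => k_neq0; apply/planarP => u z u_neq0.
rewrite /derivL mul0r addr0; set t := tr _ => /eqP; rewrite addr_eq0_2 => /eqP uz_eq.
have [t0 | t_neq0] := eqVneq t 0.
  by move/eqP: uz_eq; rewrite t0 mulr0 mulf_eq0 (negbTE u_neq0) => /eqP.
have uq_neq0 : u ^+ q != 0 by rewrite expf_neq0.
have k_fixed : k ^+ q = k by rewrite exprqD expr1n frob_nm.
pose g := s * u / u ^+ q.
have nm_g : nm g = nm s by rewrite /g /nm !exprMn exprVn exprqK; field; rewrite u_neq0.
have zuq_eq : z * u ^+ q = t / k * g ^+ q.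
  rewrite /g !exprMn exprVn exprqK.
  have -> : z = s ^+ q / k * t / u by rewrite -uz_eq mulrC mulKf.
  by field; rewrite k_neq0 u_neq0.
have tr_g : tr g = k.
  have t_eq : t = t / k * tr g.
    by rewrite {1}/t zuq_eq trMl ?tr_frob // fixedM ?fixedV ?frob_tr.
  by apply: (mulfI t_neq0); rewrite {2}t_eq; field.
by have := @tr_neq_1_add_nm g; rewrite nm_g tr_g eqxx => /(_ k_neq0).
Qed.

Lemma not_planar_witness a b w r : w != 0 -> r != 0 -> r ^+ q = r ->
  nm w * tr (a * w ^+ 2) + r * tr (b * w ^+ 2) = nm w ^+ 2 -> ~ planar (P1 a b).
Proof.
move=> w_neq0 r_neq0 r_fixed; set N := nm w => eq_w /planarP kerL.
have N_neq0 : N != 0 by rewrite nm_eq0.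
have N_fixed : N ^+ q = N := frob_nm w.
have wq_neq0 : w ^+ q != 0 by rewrite expf_neq0.
(* A kernel element of derivL a b w^-1: the hypothesis makes tr (z w^-q) = r / N. *)
pose z := w * (a * r / N + b * r ^+ 2 / N ^+ 2).
have tr_z : tr (z * w^-1 ^+ q) = r / N.
  have -> : z * w^-1 ^+ q = r / N ^+ 2 * (a * w ^+ 2) + r ^+ 2 / N ^+ 3 * (b * w ^+ 2).
    by rewrite /z exprVn /N /nm; field; rewrite w_neq0 wq_neq0.
  rewrite trD (@trMl (r / N ^+ 2)) ?(@trMl (r ^+ 2 / N ^+ 3)) ?fixedM ?fixedV ?fixedX //.
  have -> : r / N ^+ 2 * tr (a * w ^+ 2) + r ^+ 2 / N ^+ 3 * tr (b * w ^+ 2)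
          = r / N ^+ 3 * (N * tr (a * w ^+ 2) + r * tr (b * w ^+ 2)) by field.
  by rewrite eq_w; field.
have z0 : z = 0.
  apply: (kerL _ _ (invr_neq0 w_neq0)); rewrite /derivL tr_z.
  apply: (char2_eq (a * r / N + b * r ^+ 2 / N ^+ 2)); rewrite add0r /z.
  by field; rewrite N_neq0 w_neq0.
move/eqP: tr_z; rewrite z0 mul0r tr0 eq_sym mulf_eq0 invr_eq0.
by rewrite (negbTE r_neq0) (negbTE N_neq0).
Qed.

Section PlanarP1.
Variables a b : F.
Hypothesis planar_ab : planar (P1 a b).

Lemma planar_tr_eq_nm w :
  w != 0 -> tr (b * w ^+ 2) != 0 -> tr (a * w ^+ 2) = nm w.
Proof.
move=> w_neq0 trb_neq0; apply/eqP; apply: contraT => tra_neq; exfalso.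
pose r := (nm w ^+ 2 + nm w * tr (a * w ^+ 2)) / tr (b * w ^+ 2).
apply: (@not_planar_witness a b w r w_neq0 _ _ _ planar_ab).
- rewrite mulf_neq0 ?invr_eq0 // expr2 -mulrDr mulf_neq0 ?nm_eq0 //.
  by rewrite addr_eq0_2 eq_sym.
- apply: fixedM; last exact/fixedV/frob_tr.
  by rewrite exprqD (fixedX _ (frob_nm w)) (fixedM (frob_nm w) (frob_tr _)).
- rewrite /r mulfVK //; apply: (char2_eq (nm w * tr (a * w ^+ 2))); ring.
Qed.

Lemma planar_tr_neq_nm w :
  w != 0 -> tr (b * w ^+ 2) = 0 -> tr (a * w ^+ 2) != nm w.
Proof.
move=> w_neq0 trb0; apply/eqP => tra_eq.
apply: (@not_planar_witness a b w 1 w_neq0 (oner_neq0 _) (expr1n _ _) _ planar_ab).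
by rewrite trb0 tra_eq mulr0 addr0 expr2.
Qed.

Let Q w := tr (a * w ^+ 2) + nm w.

Lemma Q_eq0 w : tr (b * w ^+ 2) != 0 -> Q w = 0.
Proof.
move=> trb_neq0; have w_neq0 : w != 0.
  by apply: contra trb_neq0 => /eqP ->; rewrite expr0n mulr0 tr0.
by rewrite /Q planar_tr_eq_nm // addrr2.
Qed.

Lemma QD x z : Q (x + z) = Q x + Q z + tr (x * z ^+ q).
Proof. by rewrite /Q sqrrD2 mulrDr trD nmD; ring. Qed.

Lemma tr_bsqr_scaleD c y h : c ^+ q = c -> tr (b * h ^+ 2) = 0 ->
  tr (b * (c * y + h) ^+ 2) = c ^+ 2 * tr (b * y ^+ 2).
Proof.
move=> c_fixed trbh0; rewrite sqrrD2 mulrDr trD trbh0 addr0 exprMn mulrCA.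
by rewrite (trMl _ (fixedX 2 c_fixed)).
Qed.

Lemma tr_mul_frob_eq0 y h : (2 <= m)%N ->
  tr (b * y ^+ 2) != 0 -> tr (b * h ^+ 2) = 0 -> tr (y * h ^+ q) = 0.
Proof.
move=> m_ge2 trby_neq0 trbh0.
have [l l_fixed /andP[l_neq0 l_neq1]] := exists_fixed_neq01 m_ge2.
have trb_neq0 c : c ^+ q = c -> c != 0 -> tr (b * (c * y + h) ^+ 2) != 0.
  by move=> c_fixed c_neq0; rewrite tr_bsqr_scaleD // mulf_neq0 ?expf_neq0.
have l1_neq0 : 1 + l != 0 by rewrite addr_eq0_2 eq_sym.
have l1_fixed : (1 + l) ^+ q = 1 + l by rewrite exprqD expr1n l_fixed.
(* Q vanishes at y, at l y + h and at their sum, so the cross term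
   tr (y (l y + h)^q) = l tr (nm y) + tr (y h^q) = tr (y h^q) vanishes. *)
have := QD y (l * y + h).
rewrite addrA -{1}[y]mul1r -mulrDl !Q_eq0 ?trb_neq0 // !add0r => /esym.
rewrite exprqD exprMn l_fixed mulrDr [y * (l * _)]mulrCA trD (trMl _ l_fixed).
by rewrite -/(nm y) (tr_eq0_fixed (frob_nm y)) mulr0 add0r.
Qed.

Lemma b_eq0 : (2 <= m)%N -> b = 0.
Proof.
move=> m_ge2; apply/eqP; apply: contraT => b_neq0; exfalso.
have [c trc_neq0] := exists_tr_neq0.
have [x trbx_neq0] : exists x, tr (b * x ^+ 2) != 0.
  have [x x_sqr] := exists_sqrt_pchar2 pchar2F (c / b).
  by exists x; rewrite x_sqr mulrC mulfVK.
have [h h_sqr] := exists_sqrt_pchar2 pchar2F b^-1.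
have trbh0 : tr (b * h ^+ 2) = 0 by rewrite h_sqr mulfV // tr1.
have h_neq0 : h != 0.
  by apply: contraNneq (invr_neq0 b_neq0); rewrite -h_sqr => ->; rewrite expr0n.
have tr_yh0 y : tr (y * h ^+ q) = 0.
  have [trby0 | trby_neq0] := eqVneq (tr (b * y ^+ 2)) 0; last exact: tr_mul_frob_eq0.
  have -> : y = (y + x) + x by rewrite -addrA addrr2 addr0.
  rewrite mulrDl trD !(tr_mul_frob_eq0 m_ge2 _ trbh0) ?addr0 //.
  by rewrite sqrrD2 mulrDr trD trby0 add0r.
by move: trc_neq0; rewrite -(mulfVK (expf_neq0 q h_neq0) c) tr_yh0 eqxx.
Qed.

End PlanarP1.

Lemma exists_sqr_add_eq A : A ^+ q = A -> exists y, y ^+ 2 + y = A.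
Proof.
have two_m : (2 * m)%N = (2 * m).-1.+1 by rewrite prednK // muln_gt0 m_gt0.
have cardF2 : #|F| = (2 ^ (2 * m).-1.+1)%N by rewrite -two_m cardF -expnM mulnC.
move=> A_fixed; apply: (atr_eq0_sqr_add cardF2).
exact: atr_eq0_fixed cardF2 _ _ (esym two_m) A_fixed.
Qed.

Lemma frob_sqr_add_root y :
  (y ^+ 2 + y) ^+ q = y ^+ 2 + y -> y ^+ q != y -> y ^+ q = y + 1.
Proof.
move=> fixed nonfixed; have := fixed; rewrite exprqD -exprAC => /esym.
by case/(sqr_add_fiber pchar2F) => // yq_eq; rewrite yq_eq eqxx in nonfixed.
Qed.

Lemma exists_s_of_fixed_root a k : a != 0 -> k ^+ q = k -> k ^+ 2 + k = nm a ->
  exists2 s, 1 + nm s != 0 & a = s ^+ q / (1 + nm s).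
Proof.
move=> a_neq0 k_fixed k_root; set A := nm a in k_root.
have A_neq0 : A != 0 by rewrite nm_eq0.
pose n := k ^+ 2 / A.
have n_fixed : n ^+ q = n by rewrite fixedM ?fixedV ?fixedX ?frob_nm.
pose s := a ^+ q * (1 + n).
have sq_eq : s ^+ q = a * (1 + n) by rewrite exprMn exprqK exprqD expr1n n_fixed.
have nm_s : nm s = n.
  have -> : nm s = A * (1 + n) ^+ 2 by rewrite /nm sq_eq /s /A /nm; ring.
  rewrite /n -k_root; apply: (char2_eq (k ^+ 2 *+ 2)).
  by field; rewrite k_root.
have n_neq1 : n != 1.
  have := A_neq0; apply: contra => /eqP n1.
  have kA : k ^+ 2 = A by rewrite -(divfK A_neq0 (k ^+ 2)) -/n n1 mul1r.
  have k0 : k = 0 by apply: (addrI (k ^+ 2)); rewrite addr0 k_root kA.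
  by rewrite -kA sqrf_eq0 k0.
have n1_neq0 : 1 + n != 0 by rewrite addr_eq0_2 eq_sym.
by exists s; rewrite nm_s // sq_eq mulfK.
Qed.

Lemma exists_s_of_planar a : planar (P1 a 0) ->
  exists2 s, 1 + nm s != 0 & a = s ^+ q / (1 + nm s).
Proof.
move=> planar_a; have [-> | a_neq0] := eqVneq a 0.
  by exists 0; rewrite /nm mul0r ?addr0 ?oner_neq0 // expr0n expn_eq0 mul0r.
have [y y_root] := exists_sqr_add_eq (frob_nm a).
have [y_fixed | y_nonfixed] := eqVneq (y ^+ q) y.
  exact: exists_s_of_fixed_root y_fixed y_root.
have yq_eq : y ^+ q = y + 1 by rewrite frob_sqr_add_root // y_root frob_nm.
have [w w_sqr] := exists_sqrt_pchar2 pchar2F (y / a).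
have w_neq0 : w != 0.
  apply: contra_neq y_nonfixed => w0.
  have y0 : y = 0.
    by apply: (mulIf (invr_neq0 a_neq0)); rewrite mul0r -w_sqr w0 expr2 mul0r.
  by rewrite y0 expr0n expn_eq0.
have tra_w : tr (a * w ^+ 2) = 1.
  by rewrite w_sqr mulrC mulfVK // /tr yq_eq addrA addrr2 add0r.
have nm_w : nm w = 1.
  have nm_y : nm y = nm a by rewrite -y_root /nm yq_eq; ring.
  apply: (sqr_inj_pchar2 pchar2F); rewrite /= -nm_sqr w_sqr nmM nmV expr1n.
  by rewrite nm_y mulfV ?nm_eq0.
have := planar_tr_neq_nm planar_a w_neq0; rewrite mul0r tr0 tra_w nm_w eqxx.
by move/(_ erefl).
Qed.

End QuadraticExtension.

Theorem theorem1 :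
  exists m0 : nat, forall m : nat, (m0 <= m)%N ->
  forall (F : finFieldType), #|F| = ((2 ^ m) ^ 2)%N ->
  forall a b : F,
    planar (fun x : F => a * x ^+ (2 ^ m).+1 + b * x ^+ (2 * (2 ^ m).+1)) <->
    exists s : F, 1 + s ^+ (1 + 2 ^ m) != 0 /\
      a = s ^+ (2 ^ m) / (1 + s ^+ (1 + 2 ^ m)) /\ b = 0.
Proof.
exists 2%N => m m_ge2 F cardF a b; split=> [planar_ab | [s [k_neq0 [-> ->]]]].
  have b0 := b_eq0 cardF planar_ab m_ge2; subst b.
  have [s k_neq0 a_eq] := exists_s_of_planar cardF planar_ab.
  by exists s; rewrite -nmE.
by rewrite -nmE in k_neq0 *; exact: planar_P1_s.
Qed.
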